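(* Let $\mathcal{R}=(G_0,e\to R)$ be an expanding replacement system with limit space $X$. Then: (1) the interior of each cell of $X$ contains at least one gluing vertex and at least one regular point; (2) if $p$ lies in the interior of a cell $C(e')$, then every point of $\Omega$ mapping to $p$ has $e'$ as a prefix; (3) if $e'$ is a prefix of $f'$, then $C(e')\supseteq C(f')$; (4) if neither of $e',f'$ is a prefix of the other, then the interiors of $C(e')$ and $C(f')$ are disjoint.
   Context: A graph means a finite directed multigraph (loops, multiple edges allowed). A replacement system $\mathcal{R}=(G_0,e\to R)$: $G_0$ a graph, $e$ a non-loop directed edge from $v$ to $w$, $R$ a graph containing $v,w$ (initial and terminal vertices; other vertices interior). Replacing an edge $\varepsilon$ means deleting it and gluing in a copy of $R$ with initial/terminal vertices identified with those of $\varepsilon$; new edges are $\varepsilon\zeta$ ($\zeta\in E(R)$), new vertices $\varepsilon\nu$ ($\nu$ interior). The full expansion $G_n$ is obtained from $G_{n-1}$ by replacing every edge; edges of $G_n$ are words $\varepsilon_0\cdots\varepsilon_n$ and $V(G_0)\subset V(G_1)\subset\cdots$. $\mathcal{R}$ is expanding if neither $G_0$ nor $R$ has isolated vertices, the initial and terminal vertices of $R$ are not adjacent, and $R$ has at least three vertices and two edges. $\Omega=E(G_0)\times E(R)^{\mathbb{N}}$; $\varepsilon_0\varepsilon_1\cdots\sim\varepsilon'_0\varepsilon'_1\cdots$ iff for all $n$ the edges $\varepsilon_0\cdots\varepsilon_n$, $\varepsilon'_0\cdots\varepsilon'_n$ of $G_n$ share a vertex; $X=\Omega/\sim$ with quotient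 map $q$. Gluing vertices are elements of $\bigcup_n V(G_n)$; a sequence represents gluing vertex $u$ if $\varepsilon_0\cdots\varepsilon_n$ is incident on $u$ for all large $n$, and $u$ is identified with the point of $X$ that its representatives map to. Points of $X$ that are not gluing vertices are regular points. For an edge $e'=\varepsilon_0\cdots\varepsilon_n$ of $G_n$, the cell $C(e')$ is $q$ of the set of sequences with prefix $e'$; its boundary points are the endpoints of $e'$ (as gluing vertices), and its interior is $C(e')$ minus its boundary points. *)

From mathcomp Require Import all_boot.
From Stdlib Require Import Relations.Relation_Operators.
Set Implicit Arguments. Unset Strict Implicit. Unset Printing Implicit Defensive.

(* G0 has vertices V0, edges E0 with
   source/target maps; R has vertices VR, edges ER, and distinguished
   initial vertex iv and terminal vertex tv (the endpoints v,w of the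
   non-loop edge e, hence iv <> tv). *)
Record repl_system := ReplSystem {
  V0 : finType; E0 : finType; src0 : E0 -> V0; tgt0 : E0 -> V0;
  VR : finType; ER : finType; srcR : ER -> VR; tgtR : ER -> VR;
  iv : VR; tv : VR; iv_neq_tv : iv != tv }.

Section RS.
Variable RS : repl_system.

Definition expanding : Prop :=
  (forall v : V0 RS, exists e, src0 e = v \/ tgt0 e = v) /\
  (forall v : VR RS, exists z, srcR z = v \/ tgtR z = v) /\
  (forall z : ER RS, ~ ((srcR z = iv RS /\ tgtR z = tv RS) \/
                        (srcR z = tv RS /\ tgtR z = iv RS))) /\
  3 <= #|VR RS| /\ 2 <= #|ER RS|.

(* Edges of G_n are words e0 e1 ... en : (e0, [:: e1; ...; en]). *)
Definition edge := (E0 RS * seq (ER RS))%type.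

(* Gluing vertices: vertices of G0, and vertices  eps nu  where eps is an
   edge of some G_n and nu an interior vertex of R. *)
Inductive gvert :=
  | Base of V0 RS
  | Int of E0 RS & seq (ER RS) & VR RS.

Definition is_gluing_vertex (u : gvert) : Prop :=
  match u with
  | Base _ => True
  | Int _ _ nu => nu <> iv RS /\ nu <> tv RS
  end.

Fixpoint ends_rev (e0 : E0 RS) (r : seq (ER RS)) : gvert * gvert :=
  match r with
  | [::] => (Base (src0 e0), Base (tgt0 e0))
  | z :: r' =>
      let ab := ends_rev e0 r' in
      let vert nu := if nu == iv RS then ab.1
                     else if nu == tv RS then ab.2
                     else Int e0 (rev r') nu in
      (vert (srcR z), vert (tgtR z))
  end.

Definition ends (e' : edge) : gvert * gvert := ends_rev e'.1 (rev e'.2).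
Definition esrc (e' : edge) := (ends e').1.
Definition etgt (e' : edge) := (ends e').2.
Definition incident (e' : edge) (u : gvert) : Prop := u = esrc e' \/ u = etgt e'.

Definition share_vertex (e' f' : edge) : Prop :=
  exists u, incident e' u /\ incident f' u.

Definition Omega := (E0 RS * (nat -> ER RS))%type.

(* the prefix eps0 ... epsn, an edge of G_n *)
Definition pref (w : Omega) (n : nat) : edge := (w.1, mkseq w.2 n).

Definition has_prefix (w : Omega) (e' : edge) : Prop :=
  pref w (size e'.2) = e'.

Definition edge_prefix (e' f' : edge) : Prop :=
  e'.1 = f'.1 /\ prefix e'.2 f'.2.

Definition sim (w w' : Omega) : Prop :=
  forall n, share_vertex (pref w n) (pref w' n).

(* X = Omega / ~ (quotient by the equivalence relation generated by ~);
   a point of X is represented by its equivalence class. *)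
Definition eqv : Omega -> Omega -> Prop := clos_refl_sym_trans Omega sim.
Definition point := (Omega -> Prop).
Definition q (w : Omega) : point := fun w' => eqv w w'.
Definition is_point (p : point) : Prop := exists w, p = q w.

Definition represents (w : Omega) (u : gvert) : Prop :=
  exists N, forall n, N <= n -> incident (pref w n) u.

Definition vertex_point (u : gvert) (p : point) : Prop :=
  exists w, represents w u /\ q w = p.

Definition gluing_point (p : point) : Prop :=
  exists u, is_gluing_vertex u /\ vertex_point u p.

Definition regular_point (p : point) : Prop :=
  is_point p /\ ~ gluing_point p.

Definition cell (e' : edge) (p : point) : Prop :=
  exists w, has_prefix w e' /\ q w = p.

Definition cell_boundary (e' : edge) (p : point) : Prop :=
  vertex_point (esrc e') p \/ vertex_point (etgt e') p.

Definition cell_interior (e' : edge) (p : point) : Prop :=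
  cell e' p /\ ~ cell_boundary e' p.

End RS.

From mathcomp Require Import all_boot.
From Stdlib Require Import Relations.Relation_Operators.
From Stdlib Require Import Classical FunctionalExtensionality PropExtensionality.
Set Implicit Arguments. Unset Strict Implicit. Unset Printing Implicit Defensive.

(* Measure a gluing vertex by the generation in which it is born. The endpoints
   of an edge of G_n are born by generation n, and a vertex born inside the copy
   of R glued into an edge e' is incident only to descendants of e'. Hence two
   ~-related sequences can disagree on having prefix e' only if the one with
   that prefix eventually stays at an endpoint of e', i.e. represents it; this
   gives (2), and (4) follows from (2), while (3) is immediate. Since the initial
   and terminal vertices of R are not adjacent, an edge of G_(n+1) has at most
   one endpoint born by generation n, so a sequence represents at most one gluing
   vertex and ~-related sequences represent the same ones. For (1), a sequence
   descending along an interior vertex of R glued into e' gives a gluing point,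
   and alternating two edges of R chosen so that every second generation
   contributes only newborn endpoints gives a sequence representing no vertex. *)

Lemma take_mkseq (T : Type) (f : nat -> T) k n :
  k <= n -> take k (mkseq f n) = mkseq f k.
Proof. by move=> le_kn; rewrite /mkseq -map_take take_iota (minn_idPl le_kn). Qed.

(* Past the end of [s], [nth] returns its default, the corresponding term of [g]. *)
Definition scat (T : Type) (s : seq T) (g : nat -> T) : nat -> T :=
  fun i => nth (g (i - size s)) s i.

Lemma mkseq_scat (T : Type) (s : seq T) g m :
  mkseq (scat s g) (size s + m) = s ++ mkseq g m.
Proof.
apply: (@eq_from_nth _ (g 0)) => [|i]; first by rewrite size_cat !size_mkseq.
rewrite size_mkseq => lt_i; rewrite nth_mkseq // /scat nth_cat.
case: ltnP => [lt_si | le_si]; first exact: set_nth_default.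
by rewrite nth_default // nth_mkseq // -(ltn_add2l (size s)) subnKC.
Qed.

Section LimitSpace.
Variable RS : repl_system.
Implicit Types (w v : Omega RS) (e f : edge RS) (u x y : gvert RS)
  (s : seq (ER RS)) (r : E0 RS) (z : ER RS) (nu : VR RS).

Definition level u : nat := if u is Int _ s _ then (size s).+1 else 0.

Definition interior nu : bool := (nu != iv RS) && (nu != tv RS).

Definition hits nu z : Prop := srcR z = nu \/ tgtR z = nu.

Definition endpoint (isrc : bool) e := if isrc then esrc e else etgt e.

Definition child_vert r s nu : gvert RS :=
  if nu == iv RS then esrc (r, s)
  else if nu == tv RS then etgt (r, s) else Int r s nu.

Lemma esrc_rcons r s z : esrc (r, rcons s z) = child_vert r s (srcR z).
Proof. by rewrite /esrc /ends /= rev_rcons /= revK. Qed.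

Lemma etgt_rcons r s z : etgt (r, rcons s z) = child_vert r s (tgtR z).
Proof. by rewrite /etgt /ends /= rev_rcons /= revK. Qed.

Lemma child_vert_iv r s : child_vert r s (iv RS) = esrc (r, s).
Proof. by rewrite /child_vert eqxx. Qed.

Lemma child_vert_tv r s : child_vert r s (tv RS) = etgt (r, s).
Proof. by rewrite /child_vert eq_sym (negbTE (iv_neq_tv RS)) eqxx. Qed.

Lemma child_vert_interior r s nu : interior nu -> child_vert r s nu = Int r s nu.
Proof. by case/andP; rewrite /child_vert => /negbTE -> /negbTE ->. Qed.

Lemma incident_rcons r s z x :
  incident (r, rcons s z) x <-> exists2 nu, hits nu z & x = child_vert r s nu.
Proof.
rewrite /incident esrc_rcons etgt_rcons.
split=> [[->|->]|[nu [<-|<-] ->]]; [exists (srcR z) | exists (tgtR z) | left | right] => //.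
- by left.
- by right.
Qed.

Lemma incident_rcons_parent r s z x :
  incident (r, rcons s z) x -> incident (r, s) x \/ exists nu, x = Int r s nu.
Proof.
case/incident_rcons=> nu _ ->; rewrite /child_vert.
case: eqP => _; first by left; left.
case: eqP => _; first by left; right.
by right; exists nu.
Qed.

Lemma level_ends r s :
  level (esrc (r, s)) <= size s /\ level (etgt (r, s)) <= size s.
Proof.
elim/last_ind: s => [|s z [IHsrc IHtgt]] //.
have le_child nu : level (child_vert r s nu) <= size (rcons s z).
  rewrite size_rcons /child_vert.
  case: eqP => _; first exact: leqW.
  by case: eqP => _; first exact: leqW.
by rewrite esrc_rcons etgt_rcons !le_child.
Qed.

Lemma level_incident e x : incident e x -> level x <= size e.2.
Proof. by case: e => r s; have [? ?] := level_ends r s; case=> ->. Qed.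

Lemma level_child_vert r s nu : (size s < level (child_vert r s nu)) = interior nu.
Proof.
have [le_src le_tgt] := level_ends r s.
rewrite /child_vert /interior; case: eqP => _; first by rewrite ltnNge le_src.
by case: eqP => _; [rewrite ltnNge le_tgt | rewrite /= ltnSn].
Qed.

Lemma child_vert_old r s nu :
  level (child_vert r s nu) <= size s -> nu = iv RS \/ nu = tv RS.
Proof.
by rewrite leqNgt level_child_vert /interior negb_and !negbK => /orP[] /eqP; [left|right].
Qed.

Lemma pref_S w n : pref w n.+1 = (w.1, rcons (mkseq w.2 n) (w.2 n)).
Proof. by rewrite /pref mkseqS. Qed.

Lemma level_incident_pref w n x : incident (pref w n) x -> level x <= n.
Proof. by move/level_incident; rewrite size_mkseq. Qed.

Lemma incident_pref_S w n x : incident (pref w n.+1) x ->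
  incident (pref w n) x \/ exists nu, x = Int w.1 (mkseq w.2 n) nu.
Proof. by rewrite pref_S => /incident_rcons_parent. Qed.

Lemma incident_pref_ancestor w k n x : incident (pref w n) x -> k <= n ->
  incident (pref w k) x \/ exists2 j, k <= j < n & exists nu, x = Int w.1 (mkseq w.2 j) nu.
Proof.
elim: n => [|n IHn] inc; first by rewrite leqn0 => /eqP ->; left.
rewrite leq_eqVlt => /predU1P[-> | le_kn]; first by left.
case: (incident_pref_S inc) => [inc_n | [nu Ex]].
- case: (IHn inc_n le_kn) => [|[j /andP[le_kj lt_jn] Ex]]; first by left.
  by right; exists j; rewrite ?le_kj // ltnS ltnW.
- by right; exists n; [apply/andP | exists nu].
Qed.

Lemma incident_pref_down w k n u :
  incident (pref w n) u -> level u <= k -> k <= n -> incident (pref w k) u.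
Proof.
move=> inc lvl_u le_kn.
case: (incident_pref_ancestor inc le_kn) => // -[j /andP[le_kj _] [nu Eu]].
by move: lvl_u; rewrite Eu /= size_mkseq ltnNge le_kj.
Qed.

Lemma has_prefix_pref w n : has_prefix w (pref w n).
Proof. by rewrite /has_prefix size_mkseq. Qed.

Lemma has_prefix_pref_eq w v n : has_prefix w (pref v n) -> pref w n = pref v n.
Proof. by rewrite /has_prefix size_mkseq. Qed.

Lemma has_prefix_edge_prefix w e f : has_prefix w f -> edge_prefix e f -> has_prefix w e.
Proof.
case: e f => e0 t [r s] [/= Er Es] [/= -> pre_ts]; rewrite /has_prefix /pref /= Er.
by rewrite -(take_mkseq _ (size_prefix pre_ts)) Es; move: pre_ts; rewrite prefixE => /eqP ->.
Qed.

Lemma edge_prefix_of_has_prefix w e f :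
  has_prefix w e -> has_prefix w f -> size e.2 <= size f.2 -> edge_prefix e f.
Proof.
case: e f => e0 t [r s]; rewrite /has_prefix /pref /= => -[<- Et] [<- Es] le_ts.
by split => //; rewrite prefixE -Es take_mkseq // Et.
Qed.

Lemma incident_pref_Int w n r s nu :
  incident (pref w n) (Int r s nu) -> has_prefix w (r, s).
Proof.
move=> inc; have lt_sn : size s < n := level_incident_pref inc.
case: (incident_pref_ancestor inc (ltnW lt_sn)) => [/level_incident_pref|].
  by rewrite /= ltnn.
by case=> j _ [nu' [-> -> _]]; rewrite /has_prefix /pref size_mkseq.
Qed.

Lemma sim_sym v w : sim v w -> sim w v.
Proof. by move=> vw n; have [x [? ?]] := vw n; exists x. Qed.

Lemma eqv_stable (P : Omega RS -> Prop) :
  (forall a b, sim a b -> P a -> P b) -> forall v w, eqv v w -> P v -> P w.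
Proof.
move=> stable v w vw; suff: P v <-> P w by case.
elim: vw => {v w} [a b ab | a | a b _ IH | a b c _ IHab _ IHbc].
- by split; apply: stable; last apply: sim_sym.
- by [].
- exact: iff_sym IH.
- exact: iff_trans IHab IHbc.
Qed.

Lemma q_eqv v w : eqv v w -> q v = q w.
Proof.
move=> vw; apply: functional_extensionality => a; apply: propositional_extensionality.
by split; [apply: rst_trans; apply: rst_sym | apply: rst_trans].
Qed.

Lemma eqv_of_q v w : q v = q w -> eqv v w.
Proof. by move=> qvw; have := equal_f qvw w; rewrite /q => ->; apply: rst_refl. Qed.

Lemma sim_leave_cell v w e : sim v w -> has_prefix v e -> ~ has_prefix w e ->
  represents v (esrc e) \/ represents v (etgt e).
Proof.
move=> vw pre_v npre_w; set k := size e.2.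
have on_ends n : k <= n -> incident (pref v n) (esrc e) \/ incident (pref v n) (etgt e).
  move=> le_kn; have [x [vx wx]] := vw n.
  case: (incident_pref_ancestor vx le_kn) => [|[j /andP[le_kj _] [nu Ex]]].
    by rewrite pre_v => -[Ex|Ex]; subst x; [left|right].
  exfalso; apply: npre_w; rewrite Ex in wx.
  apply: has_prefix_edge_prefix (incident_pref_Int wx) _.
  by apply: (edge_prefix_of_has_prefix pre_v (has_prefix_pref v j)); rewrite size_mkseq.
have lvl_src : level (esrc e) <= k := level_incident (or_introl erefl).
case: (classic (forall n, k <= n -> incident (pref v n) (esrc e))) => [all_src|].
  by left; exists k.
move=> /not_all_ex_not[n0 nsrc_n0]; have [le_kn0 {}nsrc_n0] := imply_to_and _ _ nsrc_n0.
right; exists n0 => n le_n0n.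
case: (on_ends n (leq_trans le_kn0 le_n0n)) => // src_n.
by case: nsrc_n0; apply: incident_pref_down src_n (leq_trans lvl_src le_kn0) le_n0n.
Qed.

Lemma sim_has_prefix e v w :
  ~ cell_boundary e (q v) -> sim v w -> has_prefix v e -> has_prefix w e.
Proof.
move=> nbd vw pre_v; apply: NNPP => npre_w.
by apply: nbd; case: (sim_leave_cell vw pre_v npre_w) => repr; [left|right]; exists v.
Qed.

Lemma cell_interior_has_prefix e p :
  cell_interior e p -> forall w, q w = p -> has_prefix w e.
Proof.
case=> -[v [pre_v qv]] nbd w qw.
suff [] : q w = p /\ has_prefix w e by [].
apply: (eqv_stable (P := fun a => q a = p /\ has_prefix a e)) (_ : eqv v w) _.
- move=> a b ab [qa pre_a]; split; first by rewrite -qa; symmetry; apply/q_eqv/rst_step.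
  by apply: sim_has_prefix ab pre_a; rewrite qa.
- by apply: eqv_of_q; rewrite qv qw.
- by [].
Qed.

Lemma cell_edge_prefix e f : edge_prefix e f -> forall p, cell f p -> cell e p.
Proof.
by move=> ef p [w [pre_w qw]]; exists w; split; first exact: has_prefix_edge_prefix ef.
Qed.

Lemma pref_scat r s g m : pref (r, scat s g) (size s + m) = (r, s ++ mkseq g m).
Proof. by rewrite /pref mkseq_scat. Qed.

Lemma has_prefix_scat r s g : has_prefix (r, scat s g) (r, s).
Proof. by rewrite /has_prefix /= -[size s]addn0 pref_scat cats0. Qed.

Lemma level_grandchild r s z0 z1 x :
  (hits (iv RS) z1 -> interior (srcR z0)) -> (hits (tv RS) z1 -> interior (tgtR z0)) ->
  incident (r, rcons (rcons s z0) z1) x -> size s < level x.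
Proof.
move=> iv_new tv_new /incident_rcons[a hits_a ->].
have [int_a | ] := boolP (interior a).
  by rewrite child_vert_interior //= size_rcons; exact: ltnW (ltnSn _).
rewrite /interior negb_and !negbK => /orP[] /eqP Ea; rewrite Ea in hits_a *.
- by rewrite child_vert_iv esrc_rcons level_child_vert; apply: iv_new.
- by rewrite child_vert_tv etgt_rcons level_child_vert; apply: tv_new.
Qed.

Section Expanding.
Hypothesis Hexp : expanding RS.

Lemma hits_exists nu : exists z, hits nu z.
Proof. by case: Hexp => _ [+ _]; apply. Qed.

Lemma not_hits_iv_tv z : ~ (hits (iv RS) z /\ hits (tv RS) z).
Proof.
have [_ [_ [nonadj _]]] := Hexp; have ivtv := iv_neq_tv RS.
move=> [[Ei|Ei] [Et|Et]]; try by move: ivtv; rewrite -Ei -Et eqxx.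
all: by apply: (nonadj z); tauto.
Qed.

Lemma exists_interior : exists nu, interior nu.
Proof.
have [_ [_ [_ [card_VR _]]]] := Hexp.
case: (pickP interior) => [nu int_nu | no_int]; first by exists nu.
suff: #|VR RS| <= 2 by rewrite leqNgt card_VR.
apply: leq_trans (card_size [:: iv RS; tv RS]); apply/subset_leq_card/subsetP => nu _.
by move: (no_int nu); rewrite /interior !inE; case: eqP; case: eqP.
Qed.

Lemma boundary_hits_eq z a b : hits a z -> hits b z ->
  (a = iv RS \/ a = tv RS) -> (b = iv RS \/ b = tv RS) -> a = b.
Proof.
move=> Ha Hb [Ea|Ea] [Eb|Eb]; subst a b => //.
all: by exfalso; apply: (@not_hits_iv_tv z).
Qed.

Lemma incident_pref_old_eq w n x y :
  incident (pref w n.+1) x -> incident (pref w n.+1) y ->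
  level x <= n -> level y <= n -> x = y.
Proof.
rewrite pref_S => /incident_rcons[a Ha ->] /incident_rcons[b Hb ->].
rewrite -{2 4}(size_mkseq w.2 n) => /child_vert_old old_a /child_vert_old old_b.
by rewrite (boundary_hits_eq Ha Hb old_a old_b).
Qed.

Lemma sim_represents v w u : sim v w -> represents v u -> represents w u.
Proof.
move=> vw [N repr_v]; exists N => n le_Nn.
have [y [vy wy]] := vw n.+1.
suff [-> | [vy_n wy_n]] : pref w n = pref v n \/ incident (pref v n) y /\ incident (pref w n) y.
- exact: repr_v.
- have old_u := level_incident_pref (repr_v n le_Nn).
  by rewrite (incident_pref_old_eq (repr_v _ (leqW le_Nn)) vy old_u (level_incident_pref vy_n)).
case: (incident_pref_S vy) => [vy_n | [nu Ey]]; last first.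
  by left; rewrite Ey in wy; exact: has_prefix_pref_eq (incident_pref_Int wy).
case: (incident_pref_S wy) => [wy_n | [nu Ey]]; first by right.
by left; symmetry; rewrite Ey in vy; exact: has_prefix_pref_eq (incident_pref_Int vy).
Qed.

Lemma eqv_represents v w u : eqv v w -> represents v u -> represents w u.
Proof. by apply: (eqv_stable (P := fun a => represents a u)) => a b; apply: sim_represents. Qed.

Lemma represents_uniq w u u' : represents w u -> represents w u' -> u = u'.
Proof.
move=> [N repr_u] [N' repr_u']; set n := maxn N N'.
have le_N : N <= n := leq_maxl N N'; have le_N' : N' <= n := leq_maxr N N'.
apply: (incident_pref_old_eq (repr_u _ (leqW le_N)) (repr_u' _ (leqW le_N'))).
- exact: level_incident_pref (repr_u _ le_N).
- exact: level_incident_pref (repr_u' _ le_N').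
Qed.

Lemma vertex_point_represents w u : vertex_point u (q w) -> represents w u.
Proof. by case=> v [repr_v /eqv_of_q vw]; exact: eqv_represents vw repr_v. Qed.

Lemma endpoint_rcons (isrc : bool) : exists z (isrc' : bool), forall r s,
  endpoint isrc (r, s) = endpoint isrc' (r, rcons s z).
Proof.
have [z [Ez|Ez]] := hits_exists (if isrc then iv RS else tv RS);
  [exists z, true | exists z, false] => r s;
  rewrite /endpoint ?esrc_rcons ?etgt_rcons Ez;
  by case: isrc {Ez}; rewrite ?child_vert_iv ?child_vert_tv.
Qed.

Lemma follow_endpoint r s (isrc : bool) :
  exists g, forall k, incident (r, s ++ mkseq g k) (endpoint isrc (r, s)).
Proof.
have [zt [bt Et]] := endpoint_rcons true; have [zf [bf Ef]] := endpoint_rcons false.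
pose state k := iter k (fun b : bool => if b then bt else bf) isrc.
pose g k := if state k then zt else zf.
suff inv k : endpoint isrc (r, s) = endpoint (state k) (r, s ++ mkseq g k).
  by exists g => k; rewrite (inv k) /endpoint; case: (state k); [left|right].
elim: k => [|k IHk]; first by rewrite cats0.
rewrite mkseqS -rcons_cat IHk /g /state iterS -/(state k).
by case: (state k); [rewrite Et | rewrite Ef].
Qed.

Lemma represents_incident e x : incident e x -> exists w, has_prefix w e /\ represents w x.
Proof.
case: e => r s inc.
have [isrc ->] : exists isrc, x = endpoint isrc (r, s).
  by case: inc => ->; [exists true | exists false].
have [g follow_g] := follow_endpoint r s isrc.
exists (r, scat s g); split; first exact: has_prefix_scat.
by exists (size s) => n le_sn; rewrite -(subnKC le_sn) pref_scat.
Qed.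

Lemma cell_interior_q w e : has_prefix w e ->
  ~ represents w (esrc e) -> ~ represents w (etgt e) -> cell_interior e (q w).
Proof.
move=> pre_w nsrc ntgt; split; first by exists w.
by case=> /vertex_point_represents; [exact: nsrc | exact: ntgt].
Qed.

Lemma cell_interior_gluing e : exists p, cell_interior e p /\ gluing_point p.
Proof.
case: e => r s; have [nu int_nu] := exists_interior; have [z hits_z] := hits_exists nu.
have inc : incident (r, rcons s z) (Int r s nu).
  by apply/incident_rcons; exists nu; rewrite ?child_vert_interior.
have [w [pre_w repr_w]] := represents_incident inc.
have pre_ws : has_prefix w (r, s).
  by apply: has_prefix_edge_prefix pre_w _; split; last exact: prefix_rcons.
have old_end u : incident (r, s) u -> ~ represents w u.
  move=> /level_incident lvl_u /(represents_uniq repr_w) Eu.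
  by move: lvl_u; rewrite -Eu /= ltnn.
exists (q w); split.
  by apply: cell_interior_q pre_ws (old_end _ _) (old_end _ _); [left|right].
exists (Int r s nu); split; last by exists w.
by case/andP: int_nu => /eqP ? /eqP ?.
Qed.

Lemma exists_escaping_pair : exists z0 z1,
  (hits (iv RS) z1 -> interior (srcR z0)) /\ (hits (tv RS) z1 -> interior (tgtR z0)).
Proof.
have [nu int_nu] := exists_interior; have [z0 hits_z0] := hits_exists nu.
have [zi hits_zi] := hits_exists (iv RS); have [zt hits_zt] := hits_exists (tv RS).
exists z0; case: (boolP (interior (srcR z0))) => [int_src | nint_src].
  by exists zi; split => // hits_tv; exfalso; apply: (@not_hits_iv_tv zi).
exists zt; split => [hits_iv | _]; first by exfalso; apply: (@not_hits_iv_tv zt).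
by case: hits_z0 => Ez; [rewrite Ez int_nu in nint_src | rewrite Ez].
Qed.

Lemma cell_interior_regular e : exists p, cell_interior e p /\ regular_point p.
Proof.
case: e => r s; have [z0 [z1 [iv_new tv_new]]] := exists_escaping_pair.
pose g i := if odd i then z1 else z0.
pose w : Omega RS := (r, scat s g).
have escape k x : incident (pref w (size s + k.*2.+2)) x -> size s + k.*2 < level x.
  have -> : pref w (size s + k.*2.+2) = (r, rcons (rcons (s ++ mkseq g k.*2) z0) z1).
    by rewrite /w pref_scat !mkseqS /g /= odd_double /= !rcons_cat.
  by move/(level_grandchild iv_new tv_new); rewrite size_cat size_mkseq.
have no_repr u : ~ represents w u.
  case=> N repr_u.
  have le_N : N <= size s + N.*2 by rewrite -addnn addnA leq_addl.
  have le_N2 : N <= size s + N.*2.+2 by rewrite (leq_trans le_N) // leq_add2l -addn2 leq_addr.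
  have := escape N u (repr_u _ le_N2).
  by rewrite ltnNge (level_incident_pref (repr_u _ le_N)).
exists (q w); split; first exact: cell_interior_q (has_prefix_scat r s g) (no_repr _) (no_repr _).
split; first by exists w.
by case=> u [_ /vertex_point_represents /no_repr].
Qed.

End Expanding.

End LimitSpace.

Theorem proposition1p23 (RS : repl_system) (Hexp : expanding RS) :
  (forall e' : edge RS,
      (exists p, cell_interior e' p /\ gluing_point p) /\
      (exists p, cell_interior e' p /\ regular_point p)) /\
  (forall (e' : edge RS) (p : point RS), cell_interior e' p ->
      forall w : Omega RS, q w = p -> has_prefix w e') /\
  (forall e' f' : edge RS, edge_prefix e' f' ->
      forall p, cell f' p -> cell e' p) /\
  (forall e' f' : edge RS, ~ edge_prefix e' f' -> ~ edge_prefix f' e' ->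
      forall p, ~ (cell_interior e' p /\ cell_interior f' p)).
Proof.
split; first by move=> e; split; [exact: cell_interior_gluing | exact: cell_interior_regular].
split; first exact: cell_interior_has_prefix.
split; first exact: cell_edge_prefix.
move=> e f nef nfe p [int_e int_f].
have [w [pre_e qw]] := int_e.1.
have pre_f := cell_interior_has_prefix int_f qw.
case: (leqP (size e.2) (size f.2)) => [le_ef | /ltnW le_fe].
- exact/nef/(edge_prefix_of_has_prefix pre_e pre_f).
- exact/nfe/(edge_prefix_of_has_prefix pre_f pre_e).
Qed.
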